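(* Let $P_0,\dots,P_n$ be a transformation sequence constructed by using the transformation rules R1–R9 (defined in the context), and let $p$ be a non-basic predicate in $P_n$. Assume that: 1. if the folding rule is applied for the derivation of a clause $C$ in program $P_{k+1}$ from clauses $C_1,\dots,C_m$ in program $P_k$ using clauses $D_1,\dots,D_m$ in $\mathit{Defs}_k$, with $0\le k<n$, then for every $i\in\{1,\dots,m\}$ there exists $j\in\{1,\dots,n-1\}$ such that $D_i$ occurs in $P_j$ and $P_{j+1}$ is derived from $P_j$ by unfolding $D_i$; 2. during the transformation sequence $P_0,\dots,P_n$ the definition elimination rule either is never applied or it is applied w.r.t. predicate $p$ once only, in the last step, i.e. when deriving $P_n$ from $P_{n-1}$. Then, for every ground atom $A$ with predicate $p$, $M(P_0\cup\mathit{Defs}_n)\models A$ iff $M(P_n)\models A$.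
   Context: Syntax. There are infinite, pairwise disjoint sets of variables, function symbols (each with an arity) and predicate symbols (each with an arity). The predicate symbols $\mathit{true}$ (arity 0), $=$ and $\neq$ (arity 2) are basic; all other predicate symbols are non-basic. Terms are built from variables and function symbols. A basic atom is $\mathit{true}$, $t_1=t_2$ (an equation) or $t_1\neq t_2$ (a disequation); a non-basic atom is $p(t_1,\dots,t_m)$ with $p$ non-basic. A goal is a conjunction $G_1,G_2$ of atoms, where '','' is associative with neutral element $\mathit{true}$. A clause $C$ is $A\leftarrow G$ with $A$ a non-basic atom (its head $hd(C)$) and $G$ a goal (its body $bd(C)$); it is a clause for $p$ if its head has predicate $p$. A program is a set of clauses. In a program $P$, $p$ depends on $q$ iff $(p,q)$ is in the transitive closure of the relation ''some clause for $p$ in $P$ has $q$ in its body''; $p$ depends on a clause $C$ iff either $C$ is a clause for $p$ or $C$ is a clause for some $q$ on which $p$ depends. A renamed apart clause is a variant of a clause whose variables are fresh. All mgu's are relevant and idempotent. Declarative semantics. An $\mathcal H$-interpretation is a set $I$ of ground non-basic atoms. $I\models \mathit{true}$; $I\models t=t$ for every ground term $t$; $I\models t_1\neq t_2$ for distinct ground terms $t_1,t_2$; $I\models A$ iff $A\in I$ for ground non-basic $A$; $I\models G_1,G_2$ iff $I\models G_1$ and $I\models G_2$; $I\models C$ for a ground clause iff $I\models hd(C)$ or $I\not\models bd(C)$; $I\models P$ iff $I\models C$ for every ground instance $C$ of a clause of $P$. $M(P)$ denotes the least (w.r.t. inclusion) $\mathcal H$-interpretation $I$ with $I\models P$. Transformation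 rules. A transformation sequence is a sequence of programs $P_0,\dots,P_n$ where for each $k<n$, $P_{k+1}$ is derived from $P_k$ by one of the rules below. $\mathit{Defs}_k$ is the set of clauses (definition clauses) introduced by R1 during the construction of $P_0,\dots,P_k$ ($\mathit{Defs}_0=\emptyset$). R1 (Definition introduction): $P_{k+1}=P_k\cup\{D_1,\dots,D_m\}$, $m\ge1$, where $D_j$ is $\mathit{newp}(X_1,\dots,X_h)\leftarrow \mathit{Body}_j$, $\mathit{newp}$ is a non-basic predicate not occurring in $P_0,\dots,P_k$, $X_1,\dots,X_h$ are distinct variables each occurring in some $\mathit{Body}_j$, every non-basic predicate in each $\mathit{Body}_j$ occurs in $P_0$, and each $\mathit{Body}_j$ contains at least one non-basic atom. R2 (Definition elimination w.r.t. $p$): $P_{k+1}=\{C\in P_k\mid p \text{ depends on } C\}$. R3 (Unfolding): let $C$ be a renamed apart clause $H\leftarrow G_1,A,G_2$ of $P_k$ with $A$ non-basic, and let $C_1,\dots,C_m$ ($m\ge0$) be the clauses of $P_k$ whose heads unify with $A$, via mgu's $\vartheta_1,\dots,\vartheta_m$; then $P_{k+1}=(P_k-\{C\})\cup\{D_1,\dots,D_m\}$ with $D_i=(H\leftarrow G_1,bd(C_i),G_2)\vartheta_i$. R4 (Folding): let $C_i: H\leftarrow G_1,\mathit{Body}_i\vartheta,G_2$ ($i=1,\dots,m$) be renamed clauses of $P_k$ and $D_i:\mathit{newp}(X_1,\dots,X_h)\leftarrow \mathit{Body}_i$ ($i=1,\dots,m$) be all clauses of $\mathit{Defs}_k$ with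 head predicate $\mathit{newp}$, such that for every $i$ and every variable $X$ of $\mathit{Body}_i$ not in $\{X_1,\dots,X_h\}$: $X\vartheta$ is a variable not occurring in $(H,G_1,G_2)$, and $X\vartheta$ does not occur in $Y\vartheta$ for any variable $Y\neq X$ of $\mathit{Body}_i$. Then $P_{k+1}=(P_k-\{C_1,\dots,C_m\})\cup\{E\}$ with $E: H\leftarrow G_1,\mathit{newp}(X_1,\dots,X_h)\vartheta,G_2$. R5 (Subsumption): a clause $H\leftarrow G_1$ subsumes $(H\leftarrow G_1,G_2)\vartheta$ for any substitution $\vartheta$; $P_{k+1}$ is $P_k$ minus a clause subsumed by another clause of $P_k$. R6 (Head generalization): for a clause $C: H\{X/t\}\leftarrow \mathit{Body}$ in $P_k$ where $X$ occurs in $H$ and $X$ does not occur in $C$, replace $C$ by $H\leftarrow X=t,\mathit{Body}$. R7 (Case split): for a clause $C: H\leftarrow \mathit{Body}$ in $P_k$ and a binding $X/t$ with $X$ not occurring in $t$, replace $C$ by the two clauses $(H\leftarrow\mathit{Body})\{X/t\}$ and $H\leftarrow X\neq t,\mathit{Body}$. R8 (Equation elimination): for $C_1: H\leftarrow G_1,t_1=t_2,G_2$ in $P_k$: if $t_1,t_2$ unify with mgu $\vartheta$, replace $C_1$ by $(H\leftarrow G_1,G_2)\vartheta$; otherwise delete $C_1$. R9 (Disequation replacement), for a clause $C$ of $P_k$: (1) if $C$ is $H\leftarrow G_1,t_1\neq t_2,G_2$ with $t_1,t_2$ not unifiable, replace it by $H\leftarrow G_1,G_2$; (2) if $C$ is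 $H\leftarrow G_1,f(t_1,\dots,t_m)\neq f(u_1,\dots,u_m),G_2$, replace it by the $m$ clauses $H\leftarrow G_1,t_i\neq u_i,G_2$; (3) if $C$ is $H\leftarrow G_1,X\neq X,G_2$, remove it; (4) if $C$ is $H\leftarrow G_1,t\neq X,G_2$, replace it by $H\leftarrow G_1,X\neq t,G_2$; (5) if $C$ is $H\leftarrow G_1,X\neq t_1,G_2,X\neq t_2,G_3$ and there is a bijection $\rho$ from the local variables of $X\neq t_1$ in $C$ onto those of $X\neq t_2$ in $C$ with $t_1\rho=t_2$, replace it by $H\leftarrow G_1,X\neq t_1,G_2,G_3$. (A variable $X$ is a local variable of goal $G$ in clause $H\leftarrow G_1,G,G_2$ iff $X\in vars(G)-vars(H,G_1,G_2)$.) *)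

From Stdlib Require Import List Arith Relations.
Import ListNotations.

(* A function symbol is identified by (name, arity); the arity of the symbol
   applied in [Fn f ts] is [length ts]. Hence every tree is well formed and
   there are infinitely many function symbols of each arity. *)
Inductive term : Type :=
| Var (x : nat)
| Fn (f : nat) (args : list term).

Fixpoint tvars (t : term) : list nat :=
  match t with
  | Var x => [x]
  | Fn _ ts => flat_map tvars ts
  end.

Definition ground (t : term) : Prop := tvars t = [].

Definition subst := nat -> term.

Fixpoint tsubst (s : subst) (t : term) : term :=
  match t with
  | Var x => s x
  | Fn f ts => Fn f (map (tsubst s) ts)
  end.

Definition subst1 (x : nat) (t : term) : subst :=
  fun y => if Nat.eqb y x then t else Var y.

(* non-basic predicate symbols: (name, arity) *)
Definition pred := (nat * nat)%type.

(* atoms other than [true]; the goal [true] is the empty list, so that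
   "," is associative with neutral element true *)
Inductive lit : Type :=
| LEq (t1 t2 : term)
| LNeq (t1 t2 : term)
| LAt (p : nat) (args : list term).

Definition goal := list lit.
Definition hatom := (nat * list term)%type.
Definition clause := (hatom * goal)%type.
Definition program := list clause.          (* finite set of clauses (membership = In) *)

Definition hd (c : clause) : hatom := fst c.
Definition bd (c : clause) : goal := snd c.

Definition hpred (a : hatom) : pred := (fst a, length (snd a)).

Definition avars (a : hatom) : list nat := flat_map tvars (snd a).
Definition lvars (l : lit) : list nat :=
  match l with
  | LEq t1 t2 => tvars t1 ++ tvars t2
  | LNeq t1 t2 => tvars t1 ++ tvars t2
  | LAt _ ts => flat_map tvars ts
  end.
Definition gvars (g : goal) : list nat := flat_map lvars g.
Definition cvars (c : clause) : list nat := avars (hd c) ++ gvars (bd c).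

Definition asubst (s : subst) (a : hatom) : hatom := (fst a, map (tsubst s) (snd a)).
Definition lsubst (s : subst) (l : lit) : lit :=
  match l with
  | LEq t1 t2 => LEq (tsubst s t1) (tsubst s t2)
  | LNeq t1 t2 => LNeq (tsubst s t1) (tsubst s t2)
  | LAt p ts => LAt p (map (tsubst s) ts)
  end.
Definition gsubst (s : subst) (g : goal) : goal := map (lsubst s) g.
Definition csubst (s : subst) (c : clause) : clause := (asubst s (hd c), gsubst s (bd c)).

Definition lpreds (l : lit) : list pred :=
  match l with LAt p ts => [(p, length ts)] | _ => [] end.
Definition gpreds (g : goal) : list pred := flat_map lpreds g.
Definition cpreds (c : clause) : list pred := hpred (hd c) :: gpreds (bd c).

Definition occurs_pred (P : program) (q : pred) : Prop :=
  exists c, In c P /\ In q (cpreds c).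

Definition unifier (s : subst) (ts us : list term) : Prop :=
  map (tsubst s) ts = map (tsubst s) us.
Definition unifiable (ts us : list term) : Prop := exists s, unifier s ts us.
Definition idempotent (s : subst) : Prop := forall x, tsubst s (s x) = s x.
Definition relevant (s : subst) (V : list nat) : Prop :=
  forall x, s x <> Var x -> In x V /\ (forall y, In y (tvars (s x)) -> In y V).
Definition most_general (s : subst) (ts us : list term) : Prop :=
  forall s', unifier s' ts us -> exists e, forall x, s' x = tsubst e (s x).
Definition mgu (s : subst) (ts us : list term) : Prop :=
  unifier s ts us /\ most_general s ts us /\ idempotent s /\
  relevant s (flat_map tvars ts ++ flat_map tvars us).

Definition renaming (r : nat -> nat) : Prop :=
  exists r', forall x, r' (r x) = x /\ r (r' x) = x.
Definition rename (r : nat -> nat) (c : clause) : clause :=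
  csubst (fun x => Var (r x)) c.

Definition dep1 (P : program) (p q : pred) : Prop :=
  exists c, In c P /\ hpred (hd c) = p /\ In q (gpreds (bd c)).
Definition depends (P : program) (p q : pred) : Prop := clos_trans pred (dep1 P) p q.
Definition depends_cl (P : program) (p : pred) (c : clause) : Prop :=
  hpred (hd c) = p \/ exists q, depends P p q /\ hpred (hd c) = q.

Definition replace (P : program) (C : clause) (news : list clause) (P' : program) : Prop :=
  forall c, In c P' <-> (In c P /\ c <> C) \/ In c news.

(* R1: Ps gives P_0..P_k; P = P_k, P' = P_{k+1} *)
Definition R1_def_intro (Ps : nat -> program) (k : nat) (ds : list clause)
    (P P' : program) : Prop :=
  exists (newp : nat) (xs : list nat),
    ds <> [] /\ NoDup xs /\
    (forall i, i <= k -> ~ occurs_pred (Ps i) (newp, length xs)) /\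
    (forall d, In d ds ->
        hd d = (newp, map Var xs) /\
        (forall q, In q (gpreds (bd d)) -> occurs_pred (Ps 0) q) /\
        (exists q ts, In (LAt q ts) (bd d))) /\
    (forall x, In x xs -> exists d, In d ds /\ In x (gvars (bd d))) /\
    (forall c, In c P' <-> In c P \/ In c ds).

Definition R2_def_elim (p : pred) (P P' : program) : Prop :=
  forall c, In c P' <-> In c P /\ depends_cl P p c.

Definition R3_unfold (C0 : clause) (P P' : program) : Prop :=
  In C0 P /\
  exists (r : nat -> nat) (H : hatom) (G1 G2 : goal) (a : nat) (args : list term)
         (th : clause -> subst),
    renaming r /\
    rename r C0 = (H, G1 ++ LAt a args :: G2) /\
    (forall c x, In c P -> In x (cvars (rename r C0)) -> ~ In x (cvars c)) /\
    (forall ci, In ci P -> fst (hd ci) = a -> unifiable args (snd (hd ci)) ->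
        mgu (th ci) args (snd (hd ci))) /\
    (forall c, In c P' <->
        (In c P /\ c <> C0) \/
        exists ci, In ci P /\ fst (hd ci) = a /\ unifiable args (snd (hd ci)) /\
                   c = csubst (th ci) (H, G1 ++ bd ci ++ G2)).

Definition dummy_clause : clause := ((0, []), []).

Definition R4_fold (Defs : list clause) (ds : list clause) (P P' : program) : Prop :=
  exists (newp : nat) (xs : list nat) (H : hatom) (G1 G2 : goal) (th : subst)
         (cs : nat -> clause) (rs : nat -> nat -> nat),
    ds <> [] /\ NoDup ds /\
    (forall d, In d ds <-> In d Defs /\ hpred (hd d) = (newp, length xs)) /\
    (forall d, In d ds -> hd d = (newp, map Var xs)) /\
    (forall i, i < length ds ->
        In (cs i) P /\ renaming (rs i) /\
        rename (rs i) (cs i) = (H, G1 ++ gsubst th (bd (nth i ds dummy_clause)) ++ G2)) /\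
    (forall d, In d ds -> forall x, In x (gvars (bd d)) -> ~ In x xs ->
        exists y, th x = Var y /\
          ~ In y (avars H ++ gvars G1 ++ gvars G2) /\
          (forall z, In z (gvars (bd d)) -> z <> x -> ~ In y (tvars (th z)))) /\
    (forall c, In c P' <->
        (In c P /\ ~ (exists i, i < length ds /\ c = cs i)) \/
        c = (H, G1 ++ LAt newp (map (tsubst th) (map Var xs)) :: G2)).

Definition R5_subsume (P P' : program) : Prop :=
  exists (C D : clause) (th : subst) (G2 : goal),
    In C P /\ In D P /\ C <> D /\
    D = csubst th (hd C, bd C ++ G2) /\
    (forall c, In c P' <-> In c P /\ c <> D).

Definition R6_head_gen (P P' : program) : Prop :=
  exists (H : hatom) (B : goal) (x : nat) (t : term),
    let C := (asubst (subst1 x t) H, B) in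
    In C P /\ In x (avars H) /\ ~ In x (cvars C) /\
    replace P C [(H, LEq (Var x) t :: B)] P'.

Definition R7_case_split (P P' : program) : Prop :=
  exists (H : hatom) (B : goal) (x : nat) (t : term),
    In (H, B) P /\ ~ In x (tvars t) /\
    replace P (H, B) [csubst (subst1 x t) (H, B); (H, LNeq (Var x) t :: B)] P'.

Definition R8_eq_elim (P P' : program) : Prop :=
  exists (H : hatom) (G1 G2 : goal) (t1 t2 : term),
    let C1 := (H, G1 ++ LEq t1 t2 :: G2) in
    In C1 P /\
    ((exists th, mgu th [t1] [t2] /\ replace P C1 [csubst th (H, G1 ++ G2)] P') \/
     (~ unifiable [t1] [t2] /\ replace P C1 [] P')).

Definition local_var (x : nat) (H : hatom) (G1 G G2 : goal) : Prop :=
  In x (gvars G) /\ ~ In x (avars H ++ gvars G1 ++ gvars G2).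

Definition R9_diseq (P P' : program) : Prop :=
  (exists H G1 G2 t1 t2,
     In (H, G1 ++ LNeq t1 t2 :: G2) P /\ ~ unifiable [t1] [t2] /\
     replace P (H, G1 ++ LNeq t1 t2 :: G2) [(H, G1 ++ G2)] P') \/
  (exists H G1 G2 f ts us,
     In (H, G1 ++ LNeq (Fn f ts) (Fn f us) :: G2) P /\ length ts = length us /\
     replace P (H, G1 ++ LNeq (Fn f ts) (Fn f us) :: G2)
       (map (fun tu => (H, G1 ++ LNeq (fst tu) (snd tu) :: G2)) (combine ts us)) P') \/
  (exists H G1 G2 x,
     In (H, G1 ++ LNeq (Var x) (Var x) :: G2) P /\
     replace P (H, G1 ++ LNeq (Var x) (Var x) :: G2) [] P') \/
  (exists H G1 G2 t x,
     In (H, G1 ++ LNeq t (Var x) :: G2) P /\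
     replace P (H, G1 ++ LNeq t (Var x) :: G2) [(H, G1 ++ LNeq (Var x) t :: G2)] P') \/
  (exists H G1 G2 G3 x t1 t2 (r : nat -> nat),
     let C := (H, G1 ++ LNeq (Var x) t1 :: G2 ++ LNeq (Var x) t2 :: G3) in
     let L1 := fun y => local_var y H G1 [LNeq (Var x) t1] (G2 ++ LNeq (Var x) t2 :: G3) in
     let L2 := fun y => local_var y H (G1 ++ LNeq (Var x) t1 :: G2) [LNeq (Var x) t2] G3 in
     In C P /\
     (forall y, L1 y -> L2 (r y)) /\
     (forall y z, L1 y -> L1 z -> r y = r z -> y = z) /\
     (forall z, L2 z -> exists y, L1 y /\ r y = z) /\
     (forall y, ~ L1 y -> r y = y) /\
     tsubst (fun y => Var (r y)) t1 = t2 /\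
     replace P C [(H, G1 ++ LNeq (Var x) t1 :: G2 ++ G3)] P').

Inductive rule_label : Type :=
| RDef (ds : list clause)
| RElim (p : pred)
| RUnfold (c : clause)
| RFold (ds : list clause)
| RSubsume | RHeadGen | RCaseSplit | REqElim | RDiseq.

Fixpoint defs (lab : nat -> rule_label) (k : nat) : list clause :=
  match k with
  | 0 => []
  | S k' => defs lab k' ++ (match lab k' with RDef ds => ds | _ => [] end)
  end.

Definition tstep (Ps : nat -> program) (lab : nat -> rule_label) (k : nat) : Prop :=
  let P := Ps k in
  let P' := Ps (S k) in
  match lab k with
  | RDef ds => R1_def_intro Ps k ds P P'
  | RElim p => R2_def_elim p P P'
  | RUnfold c => R3_unfold c P P'
  | RFold ds => R4_fold (defs lab k) ds P P'
  | RSubsume => R5_subsume P P'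
  | RHeadGen => R6_head_gen P P'
  | RCaseSplit => R7_case_split P P'
  | REqElim => R8_eq_elim P P'
  | RDiseq => R9_diseq P P'
  end.

Definition transformation_sequence (Ps : nat -> program) (lab : nat -> rule_label)
    (n : nat) : Prop :=
  forall k, k < n -> tstep Ps lab k.

(* interpretations: I p ts means the atom p(ts) is in I *)
Definition interp := nat -> list term -> Prop.
Definition H_interp (I : interp) : Prop := forall p ts, I p ts -> Forall ground ts.

Definition sat_lit (I : interp) (l : lit) : Prop :=
  match l with
  | LEq t1 t2 => t1 = t2
  | LNeq t1 t2 => t1 <> t2
  | LAt p ts => I p ts
  end.

Definition models (I : interp) (P : program) : Prop :=
  forall c (s : subst), In c P -> (forall x, ground (s x)) ->
    I (fst (hd (csubst s c))) (snd (hd (csubst s c))) \/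
    ~ Forall (sat_lit I) (bd (csubst s c)).

Definition least_model (P : program) (M : interp) : Prop :=
  H_interp M /\ models M P /\
  forall I, H_interp I -> models I P -> forall p ts, M p ts -> I p ts.

(* Soundness: every rule preserves being a model of the least model M of P_0 u Defs_n
   (folding because a true atom of a folded predicate has a true instance of one of the
   definition clauses, all of which take part in the fold), hence M(P_n) is contained in M.
   Completeness: weigh each true atom by its cheapest proof tree in P_0 u Defs_n, where the
   definition clauses later used for folding cost 0 and every other clause costs 1. As long
   as no definition is eliminated, every true atom whose definitions have been introduced
   has in P_k a clause instance with a true body no heavier than the atom: folding keeps this
   since the folded atom weighs at most the folded body, and unfolding since the unfolded
   atom has such an instance itself. Hypothesis 1 makes the inequality strict at the last
   program before elimination, and an induction on the weight then shows that every true
   atom of p, and of the predicates p depends on, is true in M(P_n). *)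

From Stdlib Require Import List Arith Lia Relations Classical ClassicalEpsilon Wf_nat.
Import ListNotations.
From Pilot Require Import Defs.

Lemma term_nested_ind (P : term -> Prop) (HV : forall x, P (Var x))
  (HF : forall f ts, Forall P ts -> P (Fn f ts)) : forall t, P t.
Proof.
  refine (fix F t := match t with Var x => HV x | Fn f ts => HF f ts
    ((fix G l := match l return Forall P l with [] => Forall_nil _
       | u :: l' => Forall_cons _ (F u) (G l') end) ts) end).
Qed.

Lemma tsubst_comp s t u : tsubst s (tsubst t u) = tsubst (fun x => tsubst s (t x)) u.
Proof.
  induction u using term_nested_ind; simpl; auto.
  f_equal. rewrite map_map. induction H; simpl; f_equal; auto.
Qed.

Lemma tsubst_ext s s' u : (forall x, In x (tvars u) -> s x = s' x) -> tsubst s u = tsubst s' u.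
Proof.
  induction u using term_nested_ind; simpl; intros E; auto.
  f_equal. induction H; simpl in *; auto.
  f_equal; [apply H | apply IHForall]; intros; apply E, in_or_app; auto.
Qed.

Lemma tsubst_Var u : tsubst Var u = u.
Proof.
  induction u using term_nested_ind; simpl; auto. f_equal. induction H; simpl; f_equal; auto.
Qed.

Lemma tvars_tsubst s u y :
  In y (tvars (tsubst s u)) <-> exists x, In x (tvars u) /\ In y (tvars (s x)).
Proof.
  induction u using term_nested_ind; simpl.
  - split; [intros; exists x; auto | intros [z [[<-|[]] Hz]]; auto].
  - rewrite flat_map_concat_map, map_map, <- flat_map_concat_map.
    induction H; simpl. { split; [intros []| intros [? [[] _]]]. }
    rewrite !in_app_iff, IHForall, H. split.
    + intros [[z [? ?]]|[z [? ?]]]; exists z; rewrite in_app_iff; auto.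
    + intros [z [Hz ?]]; rewrite in_app_iff in Hz; destruct Hz; [left|right]; eauto.
Qed.

Definition ground_subst (s : subst) : Prop := forall x, ground (s x).

Lemma ground_tsubst s u : ground_subst s -> ground (tsubst s u).
Proof.
  intros G. unfold ground. destruct (tvars (tsubst s u)) as [|y l] eqn:E; auto.
  assert (Hy : In y (tvars (tsubst s u))) by (rewrite E; left; auto).
  apply tvars_tsubst in Hy as [x [_ Hx]]. rewrite (G x) in Hx. destruct Hx.
Qed.

Lemma tsubst_ground s u : ground u -> tsubst s u = u.
Proof.
  intros G. rewrite <- (tsubst_Var u) at 2. apply tsubst_ext.
  unfold ground in G. rewrite G. intros _ [].
Qed.

Lemma ground_subst_comp s t : ground_subst s -> ground_subst (fun x => tsubst s (t x)).
Proof. intros G x. apply ground_tsubst; auto. Qed.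

Lemma map_tsubst_comp s t ts :
  map (tsubst s) (map (tsubst t) ts) = map (tsubst (fun x => tsubst s (t x))) ts.
Proof. rewrite map_map; apply map_ext; intros; apply tsubst_comp. Qed.

Lemma map_tsubst_ext s s' ts : (forall x, In x (flat_map tvars ts) -> s x = s' x) ->
  map (tsubst s) ts = map (tsubst s') ts.
Proof.
  intros E; apply map_ext_in; intros u Hu; apply tsubst_ext; intros x Hx; apply E.
  apply in_flat_map; eauto.
Qed.

Lemma lsubst_comp s t l : lsubst s (lsubst t l) = lsubst (fun x => tsubst s (t x)) l.
Proof. destruct l; simpl; f_equal; try apply tsubst_comp; apply map_tsubst_comp. Qed.

Lemma lsubst_ext s s' l : (forall x, In x (lvars l) -> s x = s' x) -> lsubst s l = lsubst s' l.
Proof.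
  destruct l; simpl; intros E; f_equal;
    try (apply tsubst_ext; intros; apply E, in_or_app; auto).
  apply map_tsubst_ext; auto.
Qed.

Lemma gsubst_comp s t g : gsubst s (gsubst t g) = gsubst (fun x => tsubst s (t x)) g.
Proof. unfold gsubst; rewrite map_map; apply map_ext; intros; apply lsubst_comp. Qed.

Lemma gsubst_ext s s' g : (forall x, In x (gvars g) -> s x = s' x) -> gsubst s g = gsubst s' g.
Proof.
  intros E; unfold gsubst; apply map_ext_in; intros l Hl; apply lsubst_ext; intros x Hx.
  apply E. unfold gvars; apply in_flat_map; eauto.
Qed.

Lemma gsubst_app s g1 g2 : gsubst s (g1 ++ g2) = gsubst s g1 ++ gsubst s g2.
Proof. apply map_app. Qed.

Lemma gsubst_cons s l g : gsubst s (l :: g) = lsubst s l :: gsubst s g.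
Proof. reflexivity. Qed.

Lemma gvars_app g1 g2 : gvars (g1 ++ g2) = gvars g1 ++ gvars g2.
Proof. unfold gvars; apply flat_map_app. Qed.

Lemma asubst_comp s t a : asubst s (asubst t a) = asubst (fun x => tsubst s (t x)) a.
Proof. unfold asubst; simpl; f_equal; apply map_tsubst_comp. Qed.

Lemma asubst_ext s s' a : (forall x, In x (avars a) -> s x = s' x) -> asubst s a = asubst s' a.
Proof. intros; unfold asubst; f_equal; apply map_tsubst_ext; auto. Qed.

Lemma csubst_comp s t c : csubst s (csubst t c) = csubst (fun x => tsubst s (t x)) c.
Proof. unfold csubst; simpl; f_equal; [apply asubst_comp|apply gsubst_comp]. Qed.

Lemma csubst_ext s s' c : (forall x, In x (cvars c) -> s x = s' x) -> csubst s c = csubst s' c.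
Proof.
  intros E; unfold csubst, cvars in *; f_equal; [apply asubst_ext|apply gsubst_ext];
  intros; apply E, in_or_app; auto.
Qed.

Lemma hd_csubst s H G : hd (csubst s (H, G)) = asubst s H.
Proof. reflexivity. Qed.

Lemma bd_csubst s H G : bd (csubst s (H, G)) = gsubst s G.
Proof. reflexivity. Qed.

Lemma rename_csubst r s c : csubst s (rename r c) = csubst (fun x => s (r x)) c.
Proof. unfold rename; rewrite csubst_comp; reflexivity. Qed.

Lemma renaming_ground_inv r s : renaming r -> ground_subst s ->
  exists s', ground_subst s' /\ forall x, s' (r x) = s x.
Proof.
  intros [r' H] G. exists (fun y => s (r' y)). split; [intros y; apply G|].
  intros x; destruct (H x) as [-> _]; auto.
Qed.

Lemma mgu_ground_instance (th e s : subst) : (forall x, s x = tsubst e (th x)) -> ground_subst s ->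
  exists tau, ground_subst tau /\ forall x, tsubst tau (th x) = s x.
Proof.
  intros E G. exists (fun y => tsubst (fun _ => Fn 0 []) (e y)). split.
  - intros y; apply ground_tsubst; intros z; reflexivity.
  - intros x. rewrite <- tsubst_comp, <- E. apply tsubst_ground, G.
Qed.

Definition subst_merge (V : list nat) (s1 s2 : subst) : subst :=
  fun x => if in_dec Nat.eq_dec x V then s1 x else s2 x.

Lemma ground_subst_merge V s1 s2 :
  ground_subst s1 -> ground_subst s2 -> ground_subst (subst_merge V s1 s2).
Proof. intros G1 G2 x; unfold subst_merge; destruct in_dec; auto. Qed.

Lemma subst_merge_in V s1 s2 x : In x V -> subst_merge V s1 s2 x = s1 x.
Proof. unfold subst_merge; destruct in_dec; tauto. Qed.

Lemma subst_merge_notin V s1 s2 x : ~ In x V -> subst_merge V s1 s2 x = s2 x.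
Proof. unfold subst_merge; destruct in_dec; tauto. Qed.

Lemma subst_transport (L : nat -> Prop) (f : nat -> nat) (s1 s2 : subst) :
  (forall x z, L x -> L z -> f x = f z -> x = z) ->
  ground_subst s1 -> ground_subst s2 ->
  exists s, ground_subst s /\ (forall x, L x -> s (f x) = s1 x) /\
    (forall y, (forall x, L x -> f x <> y) -> s y = s2 y).
Proof.
  intros Inj G1 G2.
  exists (fun y => match excluded_middle_informative (exists x, L x /\ f x = y) with
                | left h => s1 (proj1_sig (constructive_indefinite_description _ h))
                | right _ => s2 y end).
  split; [|split].
  - intros y; destruct excluded_middle_informative; auto.
  - intros x Lx. destruct excluded_middle_informative as [h|h]; [|exfalso; eauto].
    destruct constructive_indefinite_description as [x' [Lx' E]]; simpl.
    rewrite (Inj x' x); auto.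
  - intros y Ny. destruct excluded_middle_informative as [[x [Lx E]]|]; auto.
    exfalso; apply (Ny x); auto.
Qed.

Definition holds (M : interp) (A : hatom) : Prop := M (fst A) (snd A).

Fixpoint goal_weight (w : hatom -> nat) (g : goal) : nat :=
  match g with
  | [] => 0
  | LAt q ts :: g' => w (q, ts) + goal_weight w g'
  | _ :: g' => goal_weight w g'
  end.

Lemma goal_weight_app w g1 g2 : goal_weight w (g1 ++ g2) = goal_weight w g1 + goal_weight w g2.
Proof. induction g1 as [|[] g1 IH]; simpl; try rewrite IH; lia. Qed.

Lemma atom_weight_le w g q ts : In (LAt q ts) g -> w (q, ts) <= goal_weight w g.
Proof.
  induction g as [|l g IH]; simpl; [tauto|]. intros [E|E]; [subst; simpl; lia|].
  destruct l; simpl; specialize (IH E); lia.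
Qed.

Definition supported (M : interp) (w : hatom -> nat) (P : program) (A : hatom) (e : nat) : Prop :=
  exists c s, In c P /\ ground_subst s /\ hd (csubst s c) = A /\
    Forall (sat_lit M) (bd (csubst s c)) /\ goal_weight w (bd (csubst s c)) + e <= w A.

Lemma supported_incl M w P P' A e :
  incl P P' -> supported M w P A e -> supported M w P' A e.
Proof. intros H [c [s [Hc R]]]. exists c, s; auto. Qed.

Lemma models_inst M P c s : models M P -> In c P -> ground_subst s ->
  Forall (sat_lit M) (bd (csubst s c)) -> holds M (hd (csubst s c)).
Proof. intros HM Hc Gs Hb. destruct (HM c s Hc Gs) as [H|H]; [exact H|contradiction]. Qed.

Lemma models_intro M P :
  (forall c s, In c P -> ground_subst s -> Forall (sat_lit M) (bd (csubst s c)) ->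
     holds M (hd (csubst s c))) -> models M P.
Proof.
  intros H c s Hc Gs. destruct (classic (Forall (sat_lit M) (bd (csubst s c)))); auto.
  left; apply H; auto.
Qed.

Lemma models_rename M P c r s : models M P -> In c P -> ground_subst s ->
  Forall (sat_lit M) (bd (csubst s (rename r c))) -> holds M (hd (csubst s (rename r c))).
Proof. rewrite !rename_csubst. intros; apply (models_inst M P); auto. intros x; auto. Qed.

Lemma replace_models M P C news P' : replace P C news P' -> models M P ->
  (forall c s, In c news -> ground_subst s -> Forall (sat_lit M) (bd (csubst s c)) ->
     holds M (hd (csubst s c))) ->
  models M P'.
Proof.
  intros R HM K. apply models_intro. intros c s Hc Gs Hb. apply R in Hc.
  destruct Hc as [[Hc _]|Hc]; [apply (models_inst M P)|apply K]; auto.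
Qed.

Lemma replace_supported M w P C news P' A e : replace P C news P' ->
  (forall s, ground_subst s -> Forall (sat_lit M) (bd (csubst s C)) ->
     exists c' s', In c' news /\ ground_subst s' /\ hd (csubst s' c') = hd (csubst s C) /\
       Forall (sat_lit M) (bd (csubst s' c')) /\
       goal_weight w (bd (csubst s' c')) <= goal_weight w (bd (csubst s C))) ->
  supported M w P A e -> supported M w P' A e.
Proof.
  intros R K [c [s [Hc [Gs [Hh [Hb Hw]]]]]].
  destruct (classic (c = C)) as [->|N].
  - destruct (K s Gs Hb) as [c' [s' [Hc' [Gs' [Hh' [Hb' Hw']]]]]].
    exists c', s'; repeat split; auto. apply R; auto. congruence. lia.
  - exists c, s; repeat split; auto. apply R; auto.
Qed.

Lemma combine_map_eq {T U} (g : T -> U) ts us a b : In (a, b) (combine ts us) ->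
  map g ts = map g us -> g a = g b.
Proof.
  revert us; induction ts as [|t ts IH]; intros [|u us]; simpl; try tauto.
  intros [E|Hi] Em; injection Em; intros; [injection E; intros; subst; auto|eauto].
Qed.

Lemma combine_map_neq {T U} (g : T -> U) ts us : length ts = length us ->
  map g ts <> map g us -> exists a b, In (a, b) (combine ts us) /\ g a <> g b.
Proof.
  revert us; induction ts as [|t ts IH]; intros [|u us]; simpl; try discriminate; intros L N.
  - contradiction.
  - destruct (classic (g t = g u)) as [E|E].
    + destruct (IH us) as [a [b [Hi Hn]]]; auto. intros E'; apply N; rewrite E, E'; auto.
      exists a, b; auto.
    + exists t, u; auto.
Qed.

Lemma avars_subst1 H x t y :
  In x (avars H) -> In y (tvars t) -> In y (avars (asubst (subst1 x t) H)).
Proof.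
  unfold avars, asubst; simpl. intros Hx Hy. apply in_flat_map in Hx as [u [Hu Hxu]].
  apply in_flat_map. exists (tsubst (subst1 x t) u). split; [apply in_map; auto|].
  apply tvars_tsubst. exists x. unfold subst1. rewrite Nat.eqb_refl. auto.
Qed.

Ltac solve_in := unfold cvars, hd, bd in *; simpl fst in *; simpl snd in *;
  rewrite ?gvars_app in *; simpl in *;
  rewrite ?in_app_iff in *; simpl in *; rewrite ?in_app_iff in *; tauto.

Definition R9_dedup (P P' : program) : Prop :=
  exists H G1 G2 G3 x t1 t2 (r : nat -> nat),
     let C := (H, G1 ++ LNeq (Var x) t1 :: G2 ++ LNeq (Var x) t2 :: G3) in
     let L1 := fun y => local_var y H G1 [LNeq (Var x) t1] (G2 ++ LNeq (Var x) t2 :: G3) in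
     let L2 := fun y => local_var y H (G1 ++ LNeq (Var x) t1 :: G2) [LNeq (Var x) t2] G3 in
     In C P /\
     (forall y, L1 y -> L2 (r y)) /\
     (forall y z, L1 y -> L1 z -> r y = r z -> y = z) /\
     (forall z, L2 z -> exists y, L1 y /\ r y = z) /\
     (forall y, ~ L1 y -> r y = y) /\
     tsubst (fun y => Var (r y)) t1 = t2 /\
     replace P C [(H, G1 ++ LNeq (Var x) t1 :: G2 ++ G3)] P'.

Section Rules.
Variable M : interp.
Variable w : hatom -> nat.

Lemma R5_subsume_models P P' : R5_subsume P P' -> models M P -> models M P'.
Proof.
  intros [C [D [th [G2 [_ [_ [_ [_ HP]]]]]]]] HM c s Hc Gs. apply HP in Hc. apply HM; tauto.
Qed.

Lemma R5_subsume_supported P P' A e :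
  R5_subsume P P' -> supported M w P A e -> supported M w P' A e.
Proof.
  intros [C [D [th [G2 [HC [HD [NCD [ED HP]]]]]]]] [c [s [Hc [Gs [Hh [Hb Hw]]]]]].
  destruct (classic (c = D)) as [->|N].
  - exists C, (fun x => tsubst s (th x)). rewrite ED, csubst_comp in *.
    unfold csubst in *; simpl in *. rewrite gsubst_app, Forall_app, goal_weight_app in *.
    repeat split; try tauto. apply HP; split; auto. apply ground_subst_comp; auto. lia.
  - exists c, s; repeat split; auto. apply HP; auto.
Qed.

Lemma R6_head_gen_models P P' : R6_head_gen P P' -> models M P -> models M P'.
Proof.
  intros [H [B [x [t [HC [Hx [Hnx R]]]]]]] HM. eapply replace_models; eauto.
  intros c s [<-|[]] Gs Hb. rewrite bd_csubst in Hb.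
  inversion Hb as [|? ? Heq Hb']; subst. simpl in Heq.
  assert (E : asubst s H = asubst (fun y => tsubst s (subst1 x t y)) H).
  { apply asubst_ext. intros y _. unfold subst1. destruct (Nat.eqb_spec y x); subst; auto. }
  rewrite hd_csubst, E, <- asubst_comp.
  change (holds M (hd (csubst s (asubst (subst1 x t) H, B)))). apply (models_inst M P); auto.
Qed.

Lemma R6_head_gen_supported P P' A e :
  R6_head_gen P P' -> supported M w P A e -> supported M w P' A e.
Proof.
  intros [H [B [x [t [HC [Hx [Hnx R]]]]]]]. eapply replace_supported; eauto.
  intros s Gs Hb. set (s' := fun y => if Nat.eqb y x then tsubst s t else s y).
  exists (H, LEq (Var x) t :: B), s'.
  assert (Nt : ~ In x (tvars t)).
  { intros Ht. apply Hnx. unfold cvars; simpl. apply in_or_app; left. apply avars_subst1; auto. }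
  assert (EB : gsubst s' B = gsubst s B).
  { apply gsubst_ext. intros y Hy. unfold s'. destruct (Nat.eqb_spec y x); subst; auto.
    exfalso; apply Hnx; unfold cvars; simpl; apply in_or_app; auto. }
  assert (Et : tsubst s' t = tsubst s t).
  { apply tsubst_ext. intros y Hy. unfold s'. destruct (Nat.eqb_spec y x); subst; tauto. }
  assert (Ex : s' x = tsubst s t) by (unfold s'; rewrite Nat.eqb_refl; auto).
  rewrite !hd_csubst, !bd_csubst, gsubst_cons in *. simpl lsubst. rewrite EB, Et, Ex.
  repeat split.
  - left; auto.
  - intros y. unfold s'. destruct (Nat.eqb y x); [apply ground_tsubst|]; auto.
  - rewrite asubst_comp. apply asubst_ext. intros y _. unfold s', subst1.
    destruct (y =? x); reflexivity.
  - constructor; [reflexivity|exact Hb].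
  - simpl. lia.
Qed.

Lemma R7_case_split_models P P' : R7_case_split P P' -> models M P -> models M P'.
Proof.
  intros [H [B [x [t [HC [_ R]]]]]] HM. eapply replace_models; eauto.
  intros c s [<-|[<-|[]]] Gs Hb.
  - rewrite csubst_comp in *. apply (models_inst M P); auto. apply ground_subst_comp; auto.
  - rewrite bd_csubst in Hb. inversion Hb; subst.
    change (holds M (hd (csubst s (H, B)))). apply (models_inst M P); auto.
Qed.

Lemma R7_case_split_supported P P' A e :
  R7_case_split P P' -> supported M w P A e -> supported M w P' A e.
Proof.
  intros [H [B [x [t [HC [_ R]]]]]]. eapply replace_supported; eauto.
  intros s Gs Hb. destruct (classic (s x = tsubst s t)) as [E|E].
  - exists (csubst (subst1 x t) (H, B)), s. rewrite csubst_comp.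
    assert (Eq : csubst (fun y => tsubst s (subst1 x t y)) (H, B) = csubst s (H, B)).
    { apply csubst_ext. intros y _; unfold subst1; destruct (Nat.eqb_spec y x); subst; auto. }
    rewrite Eq. repeat split; auto. left; auto.
  - exists (H, LNeq (Var x) t :: B), s. rewrite !bd_csubst in *.
    repeat split; auto; [right; left; auto|constructor; auto].
Qed.

Lemma R8_eq_elim_models P P' : R8_eq_elim P P' -> models M P -> models M P'.
Proof.
  intros [H [G1 [G2 [t1 [t2 [HC [[th [[Hu _] R]]|[_ R]]]]]]]] HM;
    eapply replace_models; eauto; [|intros ? ? []].
  intros c s [<-|[]] Gs Hb. rewrite csubst_comp in *.
  set (rho := fun x => tsubst s (th x)) in *.
  change (holds M (hd (csubst rho (H, G1 ++ LEq t1 t2 :: G2)))).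
  apply (models_inst M P); auto. { apply ground_subst_comp; auto. }
  rewrite bd_csubst, !gsubst_app in *. apply Forall_app in Hb as [Hb1 Hb2].
  apply Forall_app; split; auto. constructor; auto.
  simpl. injection Hu; intros E. unfold rho. rewrite <- !tsubst_comp, E; auto.
Qed.

Lemma R8_eq_elim_supported P P' A e :
  R8_eq_elim P P' -> supported M w P A e -> supported M w P' A e.
Proof.
  intros [H [G1 [G2 [t1 [t2 [HC [[th [[Hu [Hmg _]] R]]|[Nu R]]]]]]]];
    eapply replace_supported; eauto; intros s Gs Hb;
    rewrite bd_csubst, gsubst_app in Hb; apply Forall_app in Hb as [Hb1 Hb2];
    inversion Hb2 as [|? ? Heq Hb3]; subst; simpl in Heq.
  - destruct (Hmg s) as [e' E]. { unfold unifier; simpl; rewrite Heq; auto. }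
    destruct (mgu_ground_instance th e' s E Gs) as [tau [Gt Et]].
    exists (csubst th (H, G1 ++ G2)), tau. rewrite csubst_comp.
    rewrite (csubst_ext (fun x => tsubst tau (th x)) s); [|intros; apply Et].
    rewrite hd_csubst, !bd_csubst, !gsubst_app, !goal_weight_app. simpl.
    repeat split; auto; try (left; reflexivity); try (apply Forall_app; auto); lia.
  - exfalso. apply Nu. exists s. unfold unifier; simpl; rewrite Heq; auto.
Qed.

Lemma R9_dedup_models P P' : R9_dedup P P' -> models M P -> models M P'.
Proof.
  intros [H [G1 [G2 [G3 [x [t1 [t2 [r R]]]]]]]] HM. cbv zeta in R.
  destruct R as [HC [R1 [Rinj [_ [Rid [Et R]]]]]].
  set (L1 := fun y => local_var y H G1 [LNeq (Var x) t1] (G2 ++ LNeq (Var x) t2 :: G3)) in *.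
  set (L2 := fun y => local_var y H (G1 ++ LNeq (Var x) t1 :: G2) [LNeq (Var x) t2] G3) in *.
  set (V := avars H ++ gvars (G1 ++ LNeq (Var x) t1 :: G2) ++ gvars G3).
  eapply replace_models; eauto. intros c s [<-|[]] Gs Hb.
  destruct (subst_transport L1 r s s Rinj Gs Gs) as [s' [Gs' [S2 S1]]].
  assert (SV : forall y, In y V -> s' y = s y).
  { intros y Hy. apply S1. intros y0 Ly0 <-. apply (R1 y0 Ly0), Hy. }
  assert (Et2 : tsubst s' t2 = tsubst s t1).
  { rewrite <- Et, tsubst_comp. apply tsubst_ext. intros z Hz. simpl.
    destruct (classic (L1 z)) as [Lz|Lz]; [apply S2; auto|].
    rewrite Rid; auto. apply SV. unfold V. solve_in. }
  assert (EG : forall g, incl (gvars g) V -> gsubst s' g = gsubst s g).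
  { intros g Hg. apply gsubst_ext. intros y Hy. apply SV, Hg; auto. }
  rewrite hd_csubst, <- (asubst_ext s'); [|intros y Hy; apply SV; unfold V; solve_in].
  change (holds M (hd (csubst s' (H, G1 ++ LNeq (Var x) t1 :: G2 ++ LNeq (Var x) t2 :: G3)))).
  apply (models_inst M P); auto. rewrite !bd_csubst in *.
  rewrite !gsubst_app, !gsubst_cons, !gsubst_app, ?gsubst_cons in *.
  apply Forall_app in Hb as [Hb1 Hb2]. apply Forall_cons_iff in Hb2 as [Hn Hb3].
  apply Forall_app in Hb3 as [Hb4 Hb5]. simpl in Hn |- *.
  rewrite (EG G1), (EG G2), (EG G3), (SV x), Et2, (tsubst_ext s' s t1);
    try (intros y Hy; apply SV); try (intros y Hy); unfold V; try solve_in.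
  apply Forall_app; split; auto. constructor; auto. apply Forall_app; split; auto.
Qed.

Lemma R9_diseq_models P P' : R9_diseq P P' -> models M P -> models M P'.
Proof.
  intros [R|[R|[R|[R|R]]]] HM; [| | | |exact (R9_dedup_models P P' R HM)].
  - destruct R as [H [G1 [G2 [t1 [t2 [HC [Nu R]]]]]]]. eapply replace_models; eauto.
    intros c s [<-|[]] Gs Hb. rewrite bd_csubst, gsubst_app in Hb.
    apply Forall_app in Hb as [Hb1 Hb2].
    change (holds M (hd (csubst s (H, G1 ++ LNeq t1 t2 :: G2)))).
    apply (models_inst M P); auto. rewrite bd_csubst, gsubst_app.
    apply Forall_app; split; auto. constructor; auto.
    simpl. intros E. apply Nu. exists s. unfold unifier; simpl; rewrite E; auto.
  - destruct R as [H [G1 [G2 [f [ts [us [HC [L R]]]]]]]]. eapply replace_models; eauto.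
    intros c s Hc Gs Hb. apply in_map_iff in Hc as [[a b] [<- Hab]]. simpl fst in *; simpl snd in *.
    rewrite bd_csubst, gsubst_app in Hb. apply Forall_app in Hb as [Hb1 Hb2].
    inversion Hb2 as [|? ? Hn Hb3]; subst. simpl in Hn.
    change (holds M (hd (csubst s (H, G1 ++ LNeq (Fn f ts) (Fn f us) :: G2)))).
    apply (models_inst M P); auto. rewrite bd_csubst, gsubst_app.
    apply Forall_app; split; auto. constructor; auto.
    simpl. intros E. injection E; intros E'. apply Hn. eapply combine_map_eq; eauto.
  - destruct R as [H [G1 [G2 [x [HC R]]]]]. eapply replace_models; eauto. intros ? ? [].
  - destruct R as [H [G1 [G2 [t [x [HC R]]]]]]. eapply replace_models; eauto.
    intros c s [<-|[]] Gs Hb. rewrite bd_csubst, gsubst_app in Hb.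
    apply Forall_app in Hb as [Hb1 Hb2]. inversion Hb2 as [|? ? Hn Hb3]; subst.
    change (holds M (hd (csubst s (H, G1 ++ LNeq t (Var x) :: G2)))).
    apply (models_inst M P); auto. rewrite bd_csubst, gsubst_app.
    apply Forall_app; split; auto. constructor; auto. simpl in *. auto.
Qed.

Lemma R9_diseq_supported P P' A e :
  R9_diseq P P' -> supported M w P A e -> supported M w P' A e.
Proof.
  intros [R|[R|[R|[R|R]]]].
  - destruct R as [H [G1 [G2 [t1 [t2 [HC [Nu R]]]]]]]. eapply replace_supported; eauto.
    intros s Gs Hb. exists (H, G1 ++ G2), s. rewrite !bd_csubst in *.
    rewrite !gsubst_app, !goal_weight_app in *. simpl in *.
    apply Forall_app in Hb as [Hb1 Hb2]. inversion Hb2; subst.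
    repeat split; auto. apply Forall_app; auto.
  - destruct R as [H [G1 [G2 [f [ts [us [HC [L R]]]]]]]]. eapply replace_supported; eauto.
    intros s Gs Hb. rewrite bd_csubst, gsubst_app in Hb.
    apply Forall_app in Hb as [Hb1 Hb2]. inversion Hb2 as [|? ? Hn Hb3]; subst. simpl in Hn.
    destruct (combine_map_neq (tsubst s) ts us L) as [a [b [Hab Nab]]].
    { intros E; apply Hn; rewrite E; auto. }
    exists (H, G1 ++ LNeq a b :: G2), s. rewrite !bd_csubst, !gsubst_app, !goal_weight_app.
    repeat split; auto.
    + apply in_map_iff. exists (a, b); auto.
    + apply Forall_app; split; auto; constructor; auto.
  - destruct R as [H [G1 [G2 [x [HC R]]]]]. eapply replace_supported; eauto.
    intros s Gs Hb. exfalso. rewrite bd_csubst, gsubst_app in Hb.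
    apply Forall_app in Hb as [Hb1 Hb2]. inversion Hb2 as [|? ? Hn Hb3]; subst. apply Hn; auto.
  - destruct R as [H [G1 [G2 [t [x [HC R]]]]]]. eapply replace_supported; eauto.
    intros s Gs Hb. rewrite bd_csubst, gsubst_app in Hb.
    apply Forall_app in Hb as [Hb1 Hb2]. inversion Hb2 as [|? ? Hn Hb3]; subst. simpl in Hn.
    exists (H, G1 ++ LNeq (Var x) t :: G2), s. rewrite !bd_csubst, !gsubst_app, !goal_weight_app.
    repeat split; auto; [left; auto|].
    apply Forall_app; split; auto; constructor; simpl; auto.
  - destruct R as [H [G1 [G2 [G3 [x [t1 [t2 [r R]]]]]]]]. cbv zeta in R.
    destruct R as [HC [_ [_ [_ [_ [_ R]]]]]]. eapply replace_supported; eauto.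
    intros s Gs Hb. exists (H, G1 ++ LNeq (Var x) t1 :: G2 ++ G3), s.
    rewrite !bd_csubst in *. rewrite !gsubst_app, !gsubst_cons, !gsubst_app in *.
    apply Forall_app in Hb as [Hb1 Hb2]. apply Forall_cons_iff in Hb2 as [Hn Hb3].
    apply Forall_app in Hb3 as [Hb4 Hb5]. apply Forall_cons_iff in Hb5 as [Hn2 Hb6].
    split; [left; auto|]. split; [auto|]. split; [reflexivity|].
    split; [|rewrite !goal_weight_app; simpl; rewrite !goal_weight_app; simpl; lia].
    apply Forall_app; split; auto. constructor; auto. apply Forall_app; split; auto.
Qed.

End Rules.

Lemma mgu_merge_instance (V1 V2 : list nat) th args1 args2 s1 s2 :
  (forall x, In x V1 -> ~ In x V2) ->
  incl (flat_map tvars args1) V1 -> incl (flat_map tvars args2) V2 ->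
  map (tsubst s1) args1 = map (tsubst s2) args2 ->
  ground_subst s1 -> ground_subst s2 ->
  (unifiable args1 args2 -> mgu th args1 args2) ->
  unifiable args1 args2 /\
  exists tau, ground_subst tau /\ (forall x, In x V1 -> tsubst tau (th x) = s1 x) /\
    (forall x, In x V2 -> tsubst tau (th x) = s2 x).
Proof.
  intros Disj I1 I2 E G1 G2 Hmgu. set (sg := subst_merge V1 s1 s2).
  assert (Hu : unifier sg args1 args2).
  { unfold unifier. rewrite (map_tsubst_ext sg s1), (map_tsubst_ext sg s2); auto.
    - intros x Hx. apply subst_merge_notin. intros H1. apply (Disj x H1), I2, Hx.
    - intros x Hx. apply subst_merge_in, I1, Hx. }
  destruct (Hmgu (ex_intro _ sg Hu)) as [_ [Hmg _]]. destruct (Hmg sg Hu) as [e Ee].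
  destruct (mgu_ground_instance th e sg Ee (ground_subst_merge V1 s1 s2 G1 G2))
    as [tau [Gt Et]].
  split; [exists sg; exact Hu|].
  exists tau; split; [exact Gt|split]; intros x Hx; rewrite Et; unfold sg.
  - apply subst_merge_in; auto.
  - apply subst_merge_notin. intros H1; apply (Disj x H1 Hx).
Qed.

Lemma fold_subst_extension (g : goal) (xs V : list nat) (th tau sd : subst) :
  (forall x, In x (gvars g) -> ~ In x xs ->
     exists y, th x = Var y /\ ~ In y V /\
       (forall z, In z (gvars g) -> z <> x -> ~ In y (tvars (th z)))) ->
  (forall z, In z xs -> sd z = tsubst tau (th z)) ->
  ground_subst tau -> ground_subst sd ->
  exists sg, ground_subst sg /\ (forall v, In v V -> sg v = tau v) /\
    (forall z, In z (gvars g) -> tsubst sg (th z) = sd z).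
Proof.
  intros Hth Exs Gt Gd.
  set (L := fun x => In x (gvars g) /\ ~ In x xs).
  set (f := fun x => match th x with Var y => y | _ => 0 end).
  assert (Ef : forall x, L x -> th x = Var (f x) /\ ~ In (f x) V /\
                 forall z, In z (gvars g) -> z <> x -> ~ In (f x) (tvars (th z))).
  { intros x [Hx Nx]. destruct (Hth x Hx Nx) as [y [Ey Hy]]. unfold f; rewrite Ey; auto. }
  assert (Inj : forall x z, L x -> L z -> f x = f z -> x = z).
  { intros x z Lx Lz E. destruct (Nat.eq_dec x z) as [|N]; auto. exfalso.
    destruct (Ef x Lx) as [_ [_ Hz]]. apply (Hz z (proj1 Lz)); auto.
    rewrite E, (proj1 (Ef z Lz)). left; auto. }
  destruct (subst_transport L f sd tau Inj Gd Gt) as [sg [Gs [S1 S2]]].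
  exists sg; split; [auto|split].
  - intros v Hv. apply S2. intros x Lx <-. apply (proj1 (proj2 (Ef x Lx))), Hv.
  - intros z Hz. destruct (classic (In z xs)) as [Iz|Nz].
    + rewrite Exs; auto. apply tsubst_ext. intros v Hv. apply S2. intros x Lx <-.
      apply (proj2 (proj2 (Ef x Lx)) z Hz); auto. intros ->. apply (proj2 Lx), Iz.
    + assert (Lz : L z) by (split; auto). rewrite (proj1 (Ef z Lz)). apply S1, Lz.
Qed.

Lemma atom_inst_pred s g q ts : In (LAt q ts) (gsubst s g) -> In (q, length ts) (gpreds g).
Proof.
  intros Hi. apply in_map_iff in Hi as [l [El Hl]].
  destruct l; simpl in El; try discriminate. injection El; intros <- <-.
  apply in_flat_map. exists (LAt p args). split; auto. simpl. rewrite length_map; auto.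
Qed.

Section UnfoldFold.
Variable M : interp.
Variable w : hatom -> nat.

Lemma R3_unfold_models C0 P P' : R3_unfold C0 P P' -> models M P -> models M P'.
Proof.
  intros [HC0 [r [H [G1 [G2 [a [args [th [Hr [Erc [Hdis [Hmgu HP]]]]]]]]]]]] HM.
  apply models_intro. intros c s Hc Gs Hb. apply HP in Hc.
  destruct Hc as [[Hc _]|[ci [Hci [Ea [Hun ->]]]]]; [apply (models_inst M P); auto|].
  destruct (Hmgu ci Hci Ea Hun) as [Hu _].
  rewrite csubst_comp in *. set (rho := fun x => tsubst s (th ci x)) in *.
  assert (Gr : ground_subst rho) by (apply ground_subst_comp; auto).
  rewrite bd_csubst, !gsubst_app in Hb. apply Forall_app in Hb as [Hb1 Hb2].
  apply Forall_app in Hb2 as [Hb2 Hb3].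
  assert (Hci' : holds M (hd (csubst rho ci))) by (apply (models_inst M P); auto).
  change (holds M (hd (csubst rho (H, G1 ++ LAt a args :: G2)))).
  rewrite <- Erc. apply (models_rename M P); auto.
  rewrite Erc, bd_csubst, gsubst_app, gsubst_cons.
  apply Forall_app; split; auto. constructor; auto. simpl.
  unfold unifier in Hu. unfold rho. rewrite <- map_tsubst_comp, Hu, map_tsubst_comp.
  rewrite <- Ea. exact Hci'.
Qed.

Lemma R3_unfold_instance C0 P P' s e : R3_unfold C0 P P' -> ground_subst s ->
  Forall (sat_lit M) (bd (csubst s C0)) ->
  (forall q ts, In (LAt q ts) (bd (csubst s C0)) -> supported M w P (q, ts) e) ->
  exists c' s', In c' P' /\ ground_subst s' /\ hd (csubst s' c') = hd (csubst s C0) /\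
    Forall (sat_lit M) (bd (csubst s' c')) /\
    goal_weight w (bd (csubst s' c')) + e <= goal_weight w (bd (csubst s C0)).
Proof.
  intros [HC0 [r [H [G1 [G2 [a [args [th [Hr [Erc [Hdis [Hmgu HP]]]]]]]]]]]] Gs Hb HS.
  destruct (renaming_ground_inv r s Hr Gs) as [s' [Gs' Es']].
  assert (Ei : csubst s C0 = csubst s' (H, G1 ++ LAt a args :: G2)).
  { rewrite <- Erc, rename_csubst. apply csubst_ext. intros; rewrite Es'; auto. }
  rewrite Ei in *. rewrite bd_csubst, gsubst_app, gsubst_cons in Hb, HS |- *.
  apply Forall_app in Hb as [Hb1 Hb2]. apply Forall_cons_iff in Hb2 as [Ha Hb3].
  destruct (HS a (map (tsubst s') args)) as [ci [s2 [Hci [Gs2 [Eh [Hbi Hwi]]]]]].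
  { apply in_or_app; right; left; reflexivity. }
  unfold csubst, asubst in Eh; simpl in Eh. injection Eh as Ea Eargs.
  destruct (mgu_merge_instance (cvars (rename r C0)) (cvars ci) (th ci) args (snd (hd ci))
              s' s2) as [Hun [tau [Gt [E1 E2]]]].
  { intros x Hx Hx'. apply (Hdis ci x Hci Hx Hx'). }
  { rewrite Erc. intros x Hx. solve_in. }
  { intros x Hx. unfold cvars, avars. apply in_or_app; auto. }
  { rewrite Eargs; auto. }
  { exact Gs'. }
  { exact Gs2. }
  { intros; apply Hmgu; auto. }
  exists (csubst (th ci) (H, G1 ++ bd ci ++ G2)), tau.
  rewrite csubst_comp, hd_csubst, bd_csubst, !gsubst_app.
  set (rho := fun x => tsubst tau (th ci x)).
  assert (ER : forall g, incl (gvars g) (cvars (rename r C0)) -> gsubst rho g = gsubst s' g).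
  { intros g Hg. apply gsubst_ext. intros x Hx. apply E1, Hg, Hx. }
  rewrite (ER G1), (ER G2), (gsubst_ext rho s2 (bd ci)), (asubst_ext rho s').
  2: intros x Hx; apply E1; rewrite Erc; solve_in.
  2: intros x Hx; apply E2; unfold cvars; apply in_or_app; auto.
  2, 3: rewrite Erc; intros x Hx; solve_in.
  split; [|split; [|split; [reflexivity|split]]].
  - apply HP. right. exists ci; auto.
  - exact Gt.
  - apply Forall_app; split; auto. apply Forall_app; split; auto.
  - change (bd (csubst s2 ci)) with (gsubst s2 (bd ci)) in Hwi.
    rewrite !goal_weight_app. simpl. lia.
Qed.

Lemma R4_fold_supported Defs ds P P' A e : R4_fold Defs ds P P' ->
  (forall d s, In d ds -> ground_subst s -> Forall (sat_lit M) (bd (csubst s d)) ->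
     holds M (hd (csubst s d)) /\ w (hd (csubst s d)) <= goal_weight w (bd (csubst s d))) ->
  supported M w P A e -> supported M w P' A e.
Proof.
  intros [newp [xs [H [G1 [G2 [th [cs [rs [_ [_ [_ [Hhd [Hcs [_ HP]]]]]]]]]]]]]] HD
    [c [s [Hc [Gs [Eh [Hb Hw]]]]]].
  destruct (classic (exists i, i < length ds /\ c = cs i)) as [[i [Hi ->]]|N].
  2: { exists c, s; repeat split; auto. apply HP; left; auto. }
  destruct (Hcs i Hi) as [Hci [Hr Ern]].
  set (d := nth i ds dummy_clause) in *.
  assert (Hd : In d ds) by (apply nth_In; auto).
  destruct (renaming_ground_inv (rs i) s Hr Gs) as [s' [Gs' Es']].
  assert (Ei : csubst s (cs i) = csubst s' (H, G1 ++ gsubst th (bd d) ++ G2)).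
  { rewrite <- Ern, rename_csubst. apply csubst_ext. intros; rewrite Es'; auto. }
  rewrite Ei, bd_csubst, !gsubst_app, gsubst_comp in Hb, Hw. rewrite Ei, hd_csubst in Eh.
  apply Forall_app in Hb as [Hb1 Hb2]. apply Forall_app in Hb2 as [Hb2 Hb3].
  set (rho := fun x => tsubst s' (th x)) in *.
  destruct (HD d rho Hd (ground_subst_comp _ _ Gs') Hb2) as [Hh Hwd].
  change (hd (csubst rho d)) with (asubst rho (hd d)) in Hh, Hwd.
  change (bd (csubst rho d)) with (gsubst rho (bd d)) in Hwd.
  rewrite (Hhd d Hd) in Hh, Hwd.
  exists (H, G1 ++ LAt newp (map (tsubst th) (map Var xs)) :: G2), s'.
  rewrite hd_csubst, bd_csubst, gsubst_app, gsubst_cons. simpl lsubst.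
  rewrite map_tsubst_comp. split; [|split; [|split; [|split]]].
  - apply HP; right; auto.
  - auto.
  - auto.
  - apply Forall_app; split; [|constructor]; auto.
  - rewrite !goal_weight_app in *. simpl. unfold asubst in Hwd; simpl in Hwd. fold rho. lia.
Qed.

Lemma R4_fold_models Defs ds P P' : R4_fold Defs ds P P' -> models M P ->
  (forall q u, M q u -> (exists d, In d ds /\ hpred (hd d) = (q, length u)) ->
     exists d s, In d ds /\ ground_subst s /\ hd (csubst s d) = (q, u) /\
       Forall (sat_lit M) (bd (csubst s d))) ->
  models M P'.
Proof.
  intros [newp [xs [H [G1 [G2 [th [cs [rs [Hne [_ [Hds [Hhd [Hcs [Hth HP]]]]]]]]]]]]]] HM HS.
  apply models_intro. intros c tau Hc Gt Hb. apply HP in Hc.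
  destruct Hc as [[Hc _]| ->]; [apply (models_inst M P); auto|].
  rewrite bd_csubst, gsubst_app, gsubst_cons in Hb.
  apply Forall_app in Hb as [Hb1 Hb2]. apply Forall_cons_iff in Hb2 as [Ha Hb3].
  simpl in Ha. set (u := map (tsubst tau) (map (tsubst th) (map Var xs))) in *.
  destruct (HS newp u Ha) as [d [sd [Hd [Gsd [Ehd Hbd]]]]].
  { destruct ds as [|d0 ds']; [congruence|]. exists d0. split; [left; auto|].
    rewrite (proj2 (proj1 (Hds d0) (or_introl eq_refl))). unfold u; rewrite !length_map; auto. }
  destruct (In_nth ds d dummy_clause Hd) as [i [Hi Ei]].
  destruct (Hcs i Hi) as [Hci [Hr Ern]]. rewrite Ei in Ern.
  assert (Exs : forall z, In z xs -> sd z = tsubst tau (th z)).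
  { change (hd (csubst sd d)) with (asubst sd (hd d)) in Ehd.
    rewrite (Hhd d Hd) in Ehd. injection Ehd; intros E. unfold u in E. rewrite !map_map in E.
    intros z Hz. apply map_ext_in_iff with (a := z) in E; auto. }
  destruct (fold_subst_extension (bd d) xs (avars H ++ gvars G1 ++ gvars G2) th tau sd
              (Hth d Hd) Exs Gt Gsd) as [sg [Gsg [SV Sd]]].
  change (holds M (asubst tau H)).
  rewrite <- (asubst_ext sg); [|intros; apply SV, in_or_app; auto].
  change (holds M (hd (csubst sg (H, G1 ++ gsubst th (bd d) ++ G2)))).
  rewrite <- Ern. apply (models_rename M P); auto.
  rewrite Ern, bd_csubst, !gsubst_app, gsubst_comp, (gsubst_ext _ sd (bd d)) by exact Sd.
  rewrite (gsubst_ext sg tau G1), (gsubst_ext sg tau G2)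
    by (intros; apply SV; rewrite !in_app_iff; auto).
  apply Forall_app; split; auto. apply Forall_app; split; auto.
Qed.

End UnfoldFold.

Section Weights.
Variable Q : program.
Variable free : clause -> Prop.
Variable M : interp.
Hypothesis HM : least_model Q M.

Definition clause_cost (c : clause) : nat :=
  if excluded_middle_informative (free c) then 0 else 1.

Lemma clause_cost_cases c : (free c /\ clause_cost c = 0) \/ (~ free c /\ clause_cost c = 1).
Proof. unfold clause_cost; destruct excluded_middle_informative; auto. Qed.

Inductive proof_cost : hatom -> nat -> Prop :=
| proof_cost_clause c s A m : In c Q -> ground_subst s -> hd (csubst s c) = A ->
    goal_proof_cost (bd (csubst s c)) m -> proof_cost A (m + clause_cost c)
with goal_proof_cost : goal -> nat -> Prop :=
| goal_proof_cost_nil : goal_proof_cost [] 0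
| goal_proof_cost_eq t1 t2 g m : t1 = t2 -> goal_proof_cost g m ->
    goal_proof_cost (LEq t1 t2 :: g) m
| goal_proof_cost_neq t1 t2 g m : t1 <> t2 -> goal_proof_cost g m ->
    goal_proof_cost (LNeq t1 t2 :: g) m
| goal_proof_cost_atom q ts g m1 m2 : proof_cost (q, ts) m1 -> goal_proof_cost g m2 ->
    goal_proof_cost (LAt q ts :: g) (m1 + m2).

Scheme proof_cost_mut := Induction for proof_cost Sort Prop
with goal_proof_cost_mut := Induction for goal_proof_cost Sort Prop.

Lemma proof_cost_sound :
  (forall A m, proof_cost A m -> holds M A) /\
  (forall g m, goal_proof_cost g m -> Forall (sat_lit M) g).
Proof.
  destruct HM as [_ [HQ _]].
  assert (K : forall c s A, In c Q -> ground_subst s -> hd (csubst s c) = A ->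
                Forall (sat_lit M) (bd (csubst s c)) -> holds M A)
    by (intros; subst; apply (models_inst M Q); auto).
  split; [apply (proof_cost_mut (fun A m _ => holds M A) (fun g m _ => Forall (sat_lit M) g))
         |apply (goal_proof_cost_mut (fun A m _ => holds M A)
                   (fun g m _ => Forall (sat_lit M) g))];
  intros; try constructor; eauto.
Qed.

Lemma goal_proof_cost_of (I : interp) g :
  (forall q ts, I q ts -> exists m, proof_cost (q, ts) m) ->
  Forall (sat_lit I) g -> exists m, goal_proof_cost g m.
Proof.
  intros HI; induction g as [|l g IH]; intros F; [exists 0; constructor|].
  apply Forall_cons_iff in F as [Hl F]. destruct (IH F) as [m Hm].
  destruct l; simpl in Hl.
  - exists m; constructor; auto.
  - exists m; constructor; auto.
  - destruct (HI p args Hl) as [m1 H1]. exists (m1 + m); constructor; auto.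
Qed.

Lemma proof_cost_complete q ts : M q ts -> exists m, proof_cost (q, ts) m.
Proof.
  destruct HM as [_ [_ Hleast]]. intros Hq.
  apply (Hleast (fun q ts => exists m, proof_cost (q, ts) m)); auto.
  - intros q' ts' [m Hp]. inversion Hp; subst. unfold csubst, asubst in H1; simpl in H1.
    injection H1; intros <- _. apply Forall_forall. intros t Ht.
    apply in_map_iff in Ht as [u [<- _]]. apply ground_tsubst; auto.
  - apply models_intro. intros c s Hc Gs Hb.
    destruct (goal_proof_cost_of _ _ (fun q ts H => H) Hb) as [m Hm].
    exists (m + clause_cost c). destruct (hd (csubst s c)) eqn:E. eapply proof_cost_clause; eauto.
Qed.

Definition weight (A : hatom) : nat :=
  epsilon (inhabits 0) (fun m => proof_cost A m /\ forall m', proof_cost A m' -> m <= m').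

Lemma weight_spec A : holds M A ->
  proof_cost A (weight A) /\ forall m, proof_cost A m -> weight A <= m.
Proof.
  intros H. destruct A as [q ts]. destruct (proof_cost_complete q ts H) as [m Hm].
  unfold weight. apply (epsilon_spec (inhabits 0)).
  destruct (dec_inh_nat_subset_has_unique_least_element (fun m => proof_cost (q, ts) m))
    as [m0 [Hm0 _]]; eauto.
  intros k; apply classic.
Qed.

Lemma goal_weight_le_cost g m : goal_proof_cost g m -> goal_weight weight g <= m.
Proof.
  induction 1; simpl; auto.
  pose proof (proj2 (weight_spec (q, ts) (proj1 proof_cost_sound _ _ H)) m1 H). lia.
Qed.

Lemma goal_proof_cost_weight g : Forall (sat_lit M) g -> goal_proof_cost g (goal_weight weight g).
Proof.
  induction g as [|l g IH]; intros F; [constructor|].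
  apply Forall_cons_iff in F as [Hl F]. destruct l; simpl in *; constructor; auto.
  apply (weight_spec (p, args)); auto.
Qed.

Lemma weight_clause_le c s : In c Q -> ground_subst s -> Forall (sat_lit M) (bd (csubst s c)) ->
  weight (hd (csubst s c)) <= goal_weight weight (bd (csubst s c)) + clause_cost c.
Proof.
  intros Hc Gs Hb.
  assert (Hh : holds M (hd (csubst s c)))
    by (destruct HM as [_ [HQ _]]; apply (models_inst M Q); auto).
  apply (proj2 (weight_spec _ Hh)).
  eapply proof_cost_clause; eauto. apply goal_proof_cost_weight; auto.
Qed.

Lemma weight_optimal_clause A : holds M A -> exists c s, In c Q /\ ground_subst s /\
  hd (csubst s c) = A /\ Forall (sat_lit M) (bd (csubst s c)) /\
  goal_weight weight (bd (csubst s c)) + clause_cost c <= weight A.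
Proof.
  intros H. destruct (weight_spec A H) as [Hp _].
  inversion Hp as [c s A' m Hc Gs Eh Hg]; subst A'.
  exists c, s. pose proof (goal_weight_le_cost _ _ Hg).
  repeat split; auto; [apply (proj2 proof_cost_sound _ _ Hg)|lia].
Qed.

End Weights.

Lemma hpred_csubst s c A : hd (csubst s c) = A -> hpred (hd c) = hpred A.
Proof. intros <-. unfold hpred, csubst, asubst; simpl. rewrite length_map; auto. Qed.

Lemma occurs_pred_hd P c : In c P -> occurs_pred P (hpred (hd c)).
Proof. intros H; exists c; split; auto; left; auto. Qed.

Lemma occurs_pred_body P c q : In c P -> In q (gpreds (bd c)) -> occurs_pred P q.
Proof. intros H Hq; exists c; split; auto; right; auto. Qed.

Lemma in_defs lab k d : In d (defs lab k) <-> exists k' ds, k' < k /\ lab k' = RDef ds /\ In d ds.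
Proof.
  induction k; simpl.
  - split; [intros []| intros [? [? [H _]]]; lia].
  - rewrite in_app_iff, IHk. split.
    + intros [[k' [ds [H1 [H2 H3]]]]| H]; [exists k', ds; split; [lia|auto]|].
      destruct (lab k) eqn:E; try (destruct H). exists k, ds; auto.
    + intros [k' [ds [H1 [H2 H3]]]]. destruct (Nat.eq_dec k' k) as [->|Nk].
      * right; rewrite H2; auto.
      * left; exists k', ds; split; [lia| auto].
Qed.

Section Sequence.
Variables (n : nat) (Ps : nat -> program) (lab : nat -> rule_label).
Hypothesis HT : transformation_sequence Ps lab n.

Lemma R1_step k ds : k < n -> lab k = RDef ds -> R1_def_intro Ps k ds (Ps k) (Ps (S k)).
Proof. intros Hk E. pose proof (HT k Hk) as T. unfold tstep in T. rewrite E in T. exact T. Qed.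

Lemma R2_step k p : k < n -> lab k = RElim p -> R2_def_elim p (Ps k) (Ps (S k)).
Proof. intros Hk E. pose proof (HT k Hk) as T. unfold tstep in T. rewrite E in T. exact T. Qed.

Lemma R3_step k c : k < n -> lab k = RUnfold c -> R3_unfold c (Ps k) (Ps (S k)).
Proof. intros Hk E. pose proof (HT k Hk) as T. unfold tstep in T. rewrite E in T. exact T. Qed.

Lemma R4_step k ds : k < n -> lab k = RFold ds -> R4_fold (defs lab k) ds (Ps k) (Ps (S k)).
Proof. intros Hk E. pose proof (HT k Hk) as T. unfold tstep in T. rewrite E in T. exact T. Qed.

Lemma def_pred_fresh k ds d i : k < n -> lab k = RDef ds -> In d ds -> i <= k ->
  ~ occurs_pred (Ps i) (hpred (hd d)).
Proof.
  intros Hk E Hd Hi. destruct (R1_step k ds Hk E) as [newp [xs [_ [_ [Hf [HD _]]]]]].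
  destruct (HD d Hd) as [Ehd _]. rewrite Ehd. unfold hpred; simpl. rewrite length_map.
  apply Hf; auto.
Qed.

Lemma def_intro_in k ds d : k < n -> lab k = RDef ds -> In d ds -> In d (Ps (S k)).
Proof.
  intros Hk E Hd. destruct (R1_step k ds Hk E) as [newp [xs [_ [_ [_ [_ [_ HP]]]]]]].
  apply HP; auto.
Qed.

Lemma def_pred_not_in_P0 d : In d (defs lab n) -> ~ occurs_pred (Ps 0) (hpred (hd d)).
Proof.
  intros Hd. apply in_defs in Hd as [k [ds [Hk [E Hd]]]]. apply (def_pred_fresh k ds); auto; lia.
Qed.

Lemma def_body_preds_in_P0 d q :
  In d (defs lab n) -> In q (gpreds (bd d)) -> occurs_pred (Ps 0) q.
Proof.
  intros Hd Hq. apply in_defs in Hd as [k [ds [Hk [E Hd]]]].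
  destruct (R1_step k ds Hk E) as [newp [xs [_ [_ [_ [HD _]]]]]].
  destruct (HD d Hd) as [_ [Hb _]]. auto.
Qed.

Lemma def_intro_step_unique k1 k2 ds1 ds2 d1 d2 : k1 < n -> k2 < n ->
  lab k1 = RDef ds1 -> lab k2 = RDef ds2 -> In d1 ds1 -> In d2 ds2 ->
  hpred (hd d1) = hpred (hd d2) -> k1 = k2.
Proof.
  intros H1 H2 E1 E2 I1 I2 Eq.
  destruct (Nat.lt_trichotomy k1 k2) as [L|[L|L]]; auto; exfalso.
  - apply (def_pred_fresh k2 ds2 d2 (S k1)); auto.
    rewrite <- Eq. apply occurs_pred_hd, (def_intro_in k1 ds1); auto.
  - apply (def_pred_fresh k1 ds1 d1 (S k2)); auto.
    rewrite Eq. apply occurs_pred_hd, (def_intro_in k2 ds2); auto.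
Qed.

Definition defs_available (k : nat) (q : pred) : Prop :=
  forall d, In d (defs lab n) -> hpred (hd d) = q -> In d (defs lab k).

Lemma defs_available_occurs k q : k <= n -> occurs_pred (Ps k) q -> defs_available k q.
Proof.
  intros Hk Ho d Hd Eq. apply in_defs in Hd as [k' [ds [Hk' [E Hd]]]].
  destruct (Nat.lt_ge_cases k' k) as [L|L].
  - apply in_defs. exists k', ds; auto.
  - exfalso. apply (def_pred_fresh k' ds d k); auto. rewrite Eq; auto.
Qed.

Lemma R4_step_all_defs k ds d : k < n -> lab k = RFold ds -> In d (defs lab n) ->
  (exists d0, In d0 ds /\ hpred (hd d) = hpred (hd d0)) -> In d ds.
Proof.
  intros Hk E Hd [d0 [Hd0 Eq]].
  destruct (R4_step k ds Hk E) as [newp [xs [H [G1 [G2 [th [cs [rs R4]]]]]]]].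
  destruct R4 as [_ [_ [Hds [_ [_ [_ HP]]]]]].
  apply Hds. apply Hds in Hd0 as [_ Ep]. rewrite Eq, Ep. split; auto.
  assert (Hd' : In d (defs lab (S k))).
  { apply (defs_available_occurs (S k) (hpred (hd d))); [lia| |exact Hd|reflexivity].
    rewrite Eq, Ep.
    apply (occurs_pred_body _ (H, G1 ++ LAt newp (map (tsubst th) (map Var xs)) :: G2)).
    - apply HP; right; auto.
    - unfold gpreds; simpl. rewrite flat_map_app. apply in_or_app; right. simpl. left.
      rewrite !length_map; auto. }
  simpl in Hd'. rewrite E, app_nil_r in Hd'. exact Hd'.
Qed.

Definition folding_def (c : clause) : Prop :=
  exists k ds, k < n /\ lab k = RFold ds /\ In c ds.

Lemma folding_def_in_defs c : folding_def c -> In c (defs lab n).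
Proof.
  intros [k [ds [Hk [E Hc]]]].
  destruct (R4_step k ds Hk E) as [newp [xs [H [G1 [G2 [th [cs [rs [_ [_ [Hds _]]]]]]]]]]].
  destruct (proj1 (Hds c) Hc) as [Hc' _]. apply in_defs in Hc' as [k' [ds' [H1 [H2 H3]]]].
  apply in_defs. exists k', ds'; split; auto; lia.
Qed.

Hypothesis Hunfold : forall k ds, k < n -> lab k = RFold ds -> forall d, In d ds ->
  exists j, 1 <= j <= n - 1 /\ In d (Ps j) /\ lab j = RUnfold d.

Variable M : interp.
Hypothesis HM : least_model (Ps 0 ++ defs lab n) M.

Let w := weight (Ps 0 ++ defs lab n) folding_def.

Lemma true_atom_optimal_clause A : holds M A -> exists c s,
  In c (Ps 0 ++ defs lab n) /\ ground_subst s /\ hd (csubst s c) = A /\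
  Forall (sat_lit M) (bd (csubst s c)) /\
  goal_weight w (bd (csubst s c)) + clause_cost folding_def c <= w A.
Proof. exact (weight_optimal_clause _ folding_def M HM A). Qed.

Lemma models_P0_defs : models M (Ps 0 ++ defs lab n).
Proof. destruct HM as [_ [H _]]; exact H. Qed.

Lemma R4_step_true_def_instance k ds : k < n -> lab k = RFold ds ->
  forall q u, M q u -> (exists d, In d ds /\ hpred (hd d) = (q, length u)) ->
  exists d s, In d ds /\ ground_subst s /\ hd (csubst s d) = (q, u) /\
    Forall (sat_lit M) (bd (csubst s d)).
Proof.
  intros Hk E q u Hq [d [Hd Ed]].
  destruct (true_atom_optimal_clause (q, u) Hq) as [c [s [Hc [Gs [Eh [Hb _]]]]]].
  exists c, s. repeat split; auto. apply (R4_step_all_defs k ds c); auto.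
  - apply in_app_iff in Hc as [Hc|Hc]; auto. exfalso.
    apply (def_pred_not_in_P0 d); [apply folding_def_in_defs; exists k, ds; auto|].
    rewrite Ed. change (q, length u) with (hpred (q, u)).
    rewrite <- (hpred_csubst s c (q, u) Eh). apply occurs_pred_hd; auto.
  - exists d; split; auto. rewrite Ed. apply (hpred_csubst s c (q, u) Eh).
Qed.

Lemma models_seq k : k <= n -> models M (Ps k).
Proof.
  induction k as [|k IH]; intros Hk.
  - intros c s Hc Gs. apply models_P0_defs; auto. apply in_or_app; auto.
  - specialize (IH ltac:(lia)). pose proof (HT k ltac:(lia)) as T.
    unfold tstep in T. destruct (lab k) eqn:E.
    + destruct T as [newp [xs [_ [_ [_ [_ [_ HP]]]]]]].
      apply models_intro. intros c s Hc Gs Hb. apply HP in Hc as [Hc|Hc].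
      * apply (models_inst M (Ps k)); auto.
      * apply (models_inst M _ c s models_P0_defs); auto. apply in_or_app; right.
        apply in_defs. exists k, ds; split; auto; lia.
    + intros c s Hc Gs. apply T in Hc as [Hc _]. apply IH; auto.
    + eapply R3_unfold_models; eauto.
    + eapply R4_fold_models; eauto. apply (R4_step_true_def_instance k); auto; lia.
    + eapply R5_subsume_models; eauto.
    + eapply R6_head_gen_models; eauto.
    + eapply R7_case_split_models; eauto.
    + eapply R8_eq_elim_models; eauto.
    + eapply R9_diseq_models; eauto.
Qed.

Definition weakly_supported (k : nat) : Prop :=
  forall A, holds M A -> defs_available k (hpred A) -> supported M w (Ps k) A 0.

Lemma R3_step_supported k c A e : k < n -> lab k = RUnfold c -> weakly_supported k ->
  supported M w (Ps k) A e -> supported M w (Ps (S k)) A e.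
Proof.
  intros Hk E HW [c0 [s [Hc0 [Gs [Eh [Hb Hw]]]]]]. pose proof (R3_step k c Hk E) as R3.
  destruct (classic (c0 = c)) as [->|N].
  - destruct (R3_unfold_instance M w c (Ps k) (Ps (S k)) s 0 R3 Gs Hb)
      as [c' [s' [Hc' [Gs' [Eh' [Hb' Hw']]]]]].
    + intros q ts Hi. apply HW.
      * rewrite Forall_forall in Hb. apply (Hb _ Hi).
      * apply (defs_available_occurs k); [lia|].
        apply (occurs_pred_body _ c); auto. apply (atom_inst_pred s). exact Hi.
    + exists c', s'; repeat split; auto; [congruence|lia].
  - exists c0, s; repeat split; auto.
    destruct R3 as [_ [r [H [G1 [G2 [a [args [th [_ [_ [_ [_ HP]]]]]]]]]]]].
    apply HP; left; auto.
Qed.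

Lemma R4_step_supported k ds A e : k < n -> lab k = RFold ds ->
  supported M w (Ps k) A e -> supported M w (Ps (S k)) A e.
Proof.
  intros Hk E. apply (R4_fold_supported M w (defs lab k) ds); [apply R4_step; auto|].
  intros d s Hd Gs Hb.
  assert (HdQ : In d (Ps 0 ++ defs lab n))
    by (apply in_or_app; right; apply folding_def_in_defs; exists k, ds; auto).
  split; [apply (models_inst M _ d s models_P0_defs); auto|].
  pose proof (weight_clause_le _ folding_def M HM d s HdQ Gs Hb) as K.
  destruct (clause_cost_cases folding_def d) as [[_ C]|[F _]]; [fold w in K; lia|].
  exfalso; apply F. exists k, ds; auto.
Qed.

Lemma step_supported k A e : k < n -> (forall q, lab k <> RElim q) -> weakly_supported k ->
  supported M w (Ps k) A e -> supported M w (Ps (S k)) A e.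
Proof.
  intros Hk NE HW S. pose proof (HT k Hk) as T. unfold tstep in T. destruct (lab k) eqn:E.
  - destruct T as [newp [xs [_ [_ [_ [_ [_ HP]]]]]]].
    apply (supported_incl _ _ (Ps k)); auto. intros c Hc; apply HP; auto.
  - exfalso; apply (NE p); auto.
  - apply (R3_step_supported k c); auto.
  - apply (R4_step_supported k ds); auto.
  - eapply R5_subsume_supported; eauto.
  - eapply R6_head_gen_supported; eauto.
  - eapply R7_case_split_supported; eauto.
  - eapply R8_eq_elim_supported; eauto.
  - eapply R9_diseq_supported; eauto.
Qed.

Lemma weakly_supported_0 : weakly_supported 0.
Proof.
  intros A HA Hav. destruct (true_atom_optimal_clause A HA) as [c [s [Hc [Gs [Eh [Hb Hw]]]]]].
  apply in_app_iff in Hc as [Hc|Hc].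
  - exists c, s; repeat split; auto. lia.
  - destruct (Hav c Hc (hpred_csubst s c A Eh)).
Qed.

Lemma weakly_supported_S k : k < n -> (forall q, lab k <> RElim q) ->
  weakly_supported k -> weakly_supported (S k).
Proof.
  intros Hk NE HW A HA Hav.
  destruct (true_atom_optimal_clause A HA) as [c [s [Hc [Gs [Eh [Hb Hw]]]]]].
  apply in_app_iff in Hc as [Hc|Hc].
  - apply step_supported; auto. apply HW; auto. intros d Hd Ed. exfalso.
    apply (def_pred_not_in_P0 d Hd). rewrite Ed, <- (hpred_csubst s c A Eh).
    apply occurs_pred_hd; auto.
  - pose proof (Hav c Hc (hpred_csubst s c A Eh)) as X. simpl in X.
    apply in_app_iff in X as [X|X].
    + apply step_supported; auto. apply HW; auto. intros d Hd Ed.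
      apply in_defs in X as [kc [dsc [Hkc [Ec Ic]]]].
      pose proof Hd as Hd'. apply in_defs in Hd' as [kd [dsd [Hkd [Ed' Id]]]].
      assert (kd = kc) as ->.
      { apply (def_intro_step_unique kd kc dsd dsc d c); auto; try lia.
        rewrite Ed. symmetry; apply (hpred_csubst s c A Eh). }
      apply in_defs. exists kc, dsd; auto.
    + destruct (lab k) eqn:E; try destruct X.
      exists c, s; repeat split; auto; [apply (def_intro_in k ds); auto|lia].
Qed.

(* [P_N] is the last program of the sequence not obtained by definition elimination. *)
Section Prefix.
Variable N : nat.
Hypothesis HN : N <= n.
Hypothesis HNE : forall k, k < N -> forall q, lab k <> RElim q.
Hypothesis HNL : forall k, k < n -> (forall q, lab k <> RElim q) -> k < N.

Lemma weakly_supported_upto k : k <= N -> weakly_supported k.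
Proof.
  induction k; intros Hk; [apply weakly_supported_0|].
  apply weakly_supported_S; [lia|apply HNE; lia|apply IHk; lia].
Qed.

Lemma supported_persists k1 k2 A e : k1 <= k2 -> k2 <= N ->
  supported M w (Ps k1) A e -> supported M w (Ps k2) A e.
Proof.
  induction k2; intros H1 H2 Sk1.
  - replace k1 with 0 in Sk1 by lia. auto.
  - destruct (Nat.eq_dec k1 (S k2)) as [->|Nk]; auto.
    apply step_supported; [lia|apply HNE; lia|apply weakly_supported_upto; lia|].
    apply IHk2; auto; lia.
Qed.

Lemma P0_atom_strictly_supported B : holds M B -> occurs_pred (Ps 0) (hpred B) ->
  supported M w (Ps 0) B 1.
Proof.
  intros HB Ho. destruct (true_atom_optimal_clause B HB) as [c [s [Hc [Gs [Eh [Hb Hw]]]]]].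
  apply in_app_iff in Hc as [Hc|Hc].
  - destruct (clause_cost_cases folding_def c) as [[F _]|[_ C]].
    + exfalso. apply (def_pred_not_in_P0 c (folding_def_in_defs c F)), occurs_pred_hd, Hc.
    + exists c, s; repeat split; auto. lia.
  - exfalso. apply (def_pred_not_in_P0 c Hc). rewrite (hpred_csubst s c B Eh); auto.
Qed.

(* A folding clause costs nothing in the weights, but by hypothesis it is later unfolded,
   which replaces it by clauses over atoms of [P_0] predicates, each of positive weight. *)
Lemma strictly_supported_N A : holds M A -> supported M w (Ps N) A 1.
Proof.
  intros HA. destruct (true_atom_optimal_clause A HA) as [c [s [Hc [Gs [Eh [Hb Hw]]]]]].
  apply in_app_iff in Hc as [Hc|Hc].
  - apply (supported_persists 0); try lia. apply P0_atom_strictly_supported; auto.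
    rewrite <- (hpred_csubst s c A Eh). apply occurs_pred_hd; auto.
  - destruct (clause_cost_cases folding_def c) as [[F C]|[_ C]]; rewrite C in Hw.
    + destruct F as [k [ds [Hk [E Hcd]]]].
      destruct (Hunfold k ds Hk E c Hcd) as [j [Hj [Hcj Ej]]].
      assert (HjN : j < N) by (apply HNL; [lia|]; intros q; rewrite Ej; discriminate).
      destruct (R3_unfold_instance M w c (Ps j) (Ps (S j)) s 1 (R3_step j c ltac:(lia) Ej) Gs Hb)
        as [c' [s' [Hc' [Gs' [Eh' [Hb' Hw']]]]]].
      * intros q ts Hi. apply (supported_persists 0); try lia. apply P0_atom_strictly_supported.
        -- rewrite Forall_forall in Hb. apply (Hb _ Hi).
        -- apply (def_body_preds_in_P0 c); auto. apply (atom_inst_pred s). exact Hi.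
      * apply (supported_persists (S j)); try lia.
        exists c', s'; repeat split; auto; [congruence|lia].
    + apply in_defs in Hc as Hc'. destruct Hc' as [k' [ds [Hk' [E Hcd]]]].
      assert (k' < N) by (apply HNL; auto; intros q; rewrite E; discriminate).
      apply (supported_persists (S k')); try lia.
      exists c, s; repeat split; auto. apply (def_intro_in k' ds); auto.
Qed.

(* Strict supports make the weight decrease from an atom to the atoms of its body. *)
Lemma complete_upto (Rel : pred -> Prop) (Mn : interp) : models Mn (Ps n) ->
  (forall c, In c (Ps N) -> Rel (hpred (hd c)) -> In c (Ps n)) ->
  (forall c q, In c (Ps N) -> Rel (hpred (hd c)) -> In q (gpreds (bd c)) -> Rel q) ->
  forall A, holds M A -> Rel (hpred A) -> holds Mn A.
Proof.
  intros HMn Hsurv Hclosed A.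
  induction A as [A IH] using (induction_ltof1 _ w); unfold ltof in IH. intros HA HRA.
  destruct (strictly_supported_N A HA) as [c [s [Hc [Gs [Eh [Hb Hw]]]]]].
  rewrite <- Eh. rewrite <- (hpred_csubst s c A Eh) in HRA.
  apply (models_inst Mn (Ps n)); auto.
  apply Forall_forall. intros l Hl. rewrite Forall_forall in Hb. specialize (Hb l Hl).
  destruct l; simpl in *; auto. apply (IH (p, args)); auto.
  - pose proof (atom_weight_le w _ p args Hl). lia.
  - apply (Hclosed c); auto. apply (atom_inst_pred s). exact Hl.
Qed.

End Prefix.

Lemma complete_without_elim Mn : (forall k q, k < n -> lab k <> RElim q) ->
  models Mn (Ps n) -> forall A, holds M A -> holds Mn A.
Proof.
  intros NE HMn A HA. apply (complete_upto n) with (Rel := fun _ => True); auto.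
Qed.

Lemma complete_with_last_elim p Mn : 0 < n -> lab (n - 1) = RElim p ->
  (forall k q, k < n - 1 -> lab k <> RElim q) ->
  models Mn (Ps n) -> forall A, holds M A -> hpred A = p -> holds Mn A.
Proof.
  intros Hn Ep NE HMn A HA HpA.
  pose proof (R2_step (n - 1) p ltac:(lia) Ep) as R2.
  replace (S (n - 1)) with n in R2 by lia.
  apply (complete_upto (n - 1)) with (Rel := fun r => r = p \/ depends (Ps (n - 1)) p r);
    auto; try lia.
  - intros k Hk Nk. destruct (Nat.eq_dec k (n - 1)) as [->|]; [|lia].
    exfalso; apply (Nk p); auto.
  - intros c Hc HR. apply R2. split; auto.
    destruct HR as [HR|HR]; [left; auto|right; eauto].
  - intros c q Hc HR Hq. right.
    assert (D : dep1 (Ps (n - 1)) (hpred (hd c)) q) by (exists c; auto).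
    destruct HR as [<-|HR]; [apply t_step; auto|eapply t_trans; eauto; apply t_step; auto].
Qed.

Lemma least_model_Pn_incl Mn : least_model (Ps n) Mn -> forall q ts, Mn q ts -> M q ts.
Proof.
  intros [_ [_ Hleast]] q ts. apply Hleast; [destruct HM as [H _]; exact H|].
  apply models_seq; auto.
Qed.

End Sequence.

Theorem theorem5 (n : nat) (Ps : nat -> program) (lab : nat -> rule_label) (p : pred) :
  transformation_sequence Ps lab n ->
  occurs_pred (Ps n) p ->
  (forall k ds, k < n -> lab k = RFold ds ->
     forall d, In d ds ->
       exists j, 1 <= j <= n - 1 /\ In d (Ps j) /\ lab j = RUnfold d) ->
  (forall k q, k < n -> lab k = RElim q -> k = n - 1 /\ q = p) ->
  forall M0 Mn : interp,
    least_model (Ps 0 ++ defs lab n) M0 ->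
    least_model (Ps n) Mn ->
    forall (q : nat) (ts : list term),
      (q, length ts) = p -> Forall ground ts ->
      (M0 q ts <-> Mn q ts).
Proof.
  intros HT _ Hunfold Helim M0 Mn HM0 HMn q ts Hp _.
  split; [|apply (least_model_Pn_incl n Ps lab HT M0 HM0 Mn HMn)].
  intros H0. change (holds Mn (q, ts)). destruct HMn as [_ [HMn _]].
  destruct (classic (exists r, 0 < n /\ lab (n - 1) = RElim r)) as [[r [Hn Er]]|NR].
  - destruct (Helim (n - 1) r ltac:(lia) Er) as [_ ->].
    apply (complete_with_last_elim n Ps lab HT Hunfold M0 HM0 p); auto.
    intros k r' Hk E. destruct (Helim k r' ltac:(lia) E). lia.
  - apply (complete_without_elim n Ps lab HT Hunfold M0 HM0); auto.
    intros k r Hk E. apply NR. exists r.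
    destruct (Helim k r Hk E) as [<- _]. split; [lia|auto].
Qed.
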